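(* There is a constant $c>0$ such that for all integers $n\ge 2$ and $\tau\ge 1$ there exist a value $\varepsilon\ge 0$ and a set $\mathcal X$ of $n$ entities, each moving along a trajectory of $\tau$ edges (in general position), whose Reeb graph $\mathcal R$ has at least $c\,\tau n^2$ vertices and at least $c\,\tau n^2$ edges. In other words, the Reeb graph can have $\Omega(\tau n^2)$ vertices and $\Omega(\tau n^2)$ edges.
   Context: Let $\mathcal X$ be a set of $n$ entities. All trajectories are sampled at common times $t_0<t_1<\dots<t_\tau$; each entity $x$ has a position $x(t_i)\in\mathbb R^2$ at each $t_i$ and moves with constant velocity between consecutive sample times, so its trajectory is a polygonal path with $\tau$ edges defined on $[t_0,t_\tau]$. Fix $\varepsilon\ge 0$. Two entities $x,y$ are directly connected at time $t$ if their closed discs of radius $\varepsilon$ centred at $x(t)$ and $y(t)$ intersect, i.e. $\|x(t)-y(t)\|\le 2\varepsilon$. They are $\varepsilon$-connected at time $t$ if there is a sequence $x=x_0,\dots,x_k=y$ of entities with $x_i,x_{i+1}$ directly connected at $t$ for all $i$. A component at time $t$ is a maximal set of pairwise $\varepsilon$-connected entities; the components at time $t$ partition $\mathcal X$. General position: no two distinct events at which a pair of entities becomes directly connected or directly disconnected occur at the same time. The Reeb graph $\mathcal R$ is the directed graph describing the evolution of the components over $[t_0,t_\tau]$: it has a start vertex for each component at $t_0$ (in-degree 0, out-degree 1), an end vertex for each component at $t_\tau$ (in-degree 1, out-degree 0), a merge vertex (in-degree 2, out-degree 1) at each time two components unite into one, and a split vertex (in-degree 1, out-degree 2) at each time a component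 splits into two; each vertex $v$ has a time $t_v$, and each edge $e=(u,v)$ with $t_u<t_v$ corresponds to a set $C_e$ of entities that is a component at every time in $[t_u,t_v]$. *)

From Stdlib Require Import Reals Lra List Relations.
Open Scope R_scope.

(* Data of an instance:
   - n entities, indexed by 0..n-1;
   - tau edges, sample times T 0 < T 1 < ... < T tau;
   - P i k : position of entity i at time T k (k <= tau), in R^2 = R*R;
   - eps >= 0. *)

Definition lerp (ta tb : R) (pa pb : R * R) (t : R) : R * R :=
  let s := (t - ta) / (tb - ta) in
  (fst pa + s * (fst pb - fst pa), snd pa + s * (snd pb - snd pa)).

(* Polygonal trajectory through Q 0, ..., Q k at times T 0, ..., T k
   (meaningful for T 0 <= t <= T k). *)
Fixpoint traj (T : nat -> R) (Q : nat -> R * R) (k : nat) (t : R) : R * R :=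
  match k with
  | O => Q O
  | S k' => if Rle_dec t (T k') then traj T Q k' t
            else lerp (T k') (T k) (Q k') (Q k) t
  end.

Definition pos (tau : nat) (T : nat -> R) (P : nat -> nat -> R * R)
  (i : nat) (t : R) : R * R := traj T (P i) tau t.

Definition dist2 (a b : R * R) : R :=
  sqrt ((fst a - fst b) ^ 2 + (snd a - snd b) ^ 2).

(* closed eps-discs intersect *)
Definition dconn tau T P (eps t : R) (i j : nat) : Prop :=
  dist2 (pos tau T P i t) (pos tau T P j t) <= 2 * eps.

Definition econn (n : nat) tau T P (eps t : R) (i j : nat) : Prop :=
  clos_refl_trans nat
    (fun a b => (a < n)%nat /\ (b < n)%nat /\ dconn tau T P eps t a b) i j.

Definition valid_input (tau : nat) (T : nat -> R) (eps : R) : Prop :=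
  (forall k, (k < tau)%nat -> T k < T (S k)) /\ 0 <= eps.

Definition conn_event tau T P eps (i j : nat) (s : R) : Prop :=
  T O < s <= T tau /\ dconn tau T P eps s i j /\
  exists d, d > 0 /\ forall t, s - d < t < s -> ~ dconn tau T P eps t i j.

Definition disc_event tau T P eps (i j : nat) (s : R) : Prop :=
  T O <= s < T tau /\ dconn tau T P eps s i j /\
  exists d, d > 0 /\ forall t, s < t < s + d -> ~ dconn tau T P eps t i j.

Definition pair_event tau T P eps (b : bool) (i j : nat) (s : R) : Prop :=
  if b then conn_event tau T P eps i j s else disc_event tau T P eps i j s.

Definition general_position (n tau : nat) T P eps : Prop :=
  forall s i j k l b1 b2,
    (i < j)%nat -> (j < n)%nat -> (k < l)%nat -> (l < n)%nat ->
    pair_event tau T P eps b1 i j s -> pair_event tau T P eps b2 k l s ->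
    i = k /\ j = l /\ b1 = b2.

(* Times strictly inside (T 0, T tau) at which the component partition
   changes (merge or split vertices of the Reeb graph). *)
Definition critical_time n tau T P eps (s : R) : Prop :=
  T O < s < T tau /\
  forall d, d > 0 -> exists t, T O <= t <= T tau /\ Rabs (t - s) < d /\
    exists i j, (i < n)%nat /\ (j < n)%nat /\
      ~ (econn n tau T P eps t i j <-> econn n tau T P eps s i j).

Definition distinct_components n tau T P eps (t : R) (A : list nat) : Prop :=
  NoDup A /\ (forall i, In i A -> (i < n)%nat) /\
  forall i j, In i A -> In j A -> i <> j -> ~ econn n tau T P eps t i j.

(* The Reeb graph has at least `b` vertices: start vertices (components at
   T 0), end vertices (components at T tau), merge/split vertices. *)
Definition reeb_vertices_at_least n tau T P eps (b : R) : Prop :=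
  exists (A B : list nat) (S : list R),
    distinct_components n tau T P eps (T O) A /\
    distinct_components n tau T P eps (T tau) B /\
    NoDup S /\ (forall s, In s S -> critical_time n tau T P eps s) /\
    INR (length A + length B + length S) >= b.

(* A witness (i,t) denotes the edge whose component is that of i at time t,
   over the maximal time interval containing t on which that set is a
   component. *)
Definition same_edge n tau T P eps (w w' : nat * R) : Prop :=
  let (i, t) := w in let (i', t') := w' in
  (forall j, (j < n)%nat ->
     (econn n tau T P eps t i j <-> econn n tau T P eps t' i' j)) /\
  forall u, Rmin t t' <= u <= Rmax t t' ->
    forall j, (j < n)%nat ->
      (econn n tau T P eps u i j <-> econn n tau T P eps t i j).

Definition reeb_edges_at_least n tau T P eps (b : R) : Prop :=
  exists W : list (nat * R),
    (forall w, In w W -> (fst w < n)%nat /\ T O <= snd w <= T tau) /\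
    (forall p q, (p < q)%nat -> (q < length W)%nat ->
       ~ same_edge n tau T P eps (nth p W (O, 0)) (nth q W (O, 0))) /\
    INR (length W) >= b.

From Pilot Require Import Defs.
From Stdlib Require Import Reals Lra Lia List Relations.
Open Scope R_scope.

(* Take [eps = 1/8], so that two entities touch iff they are within [1/4] of
   each other, and put everything on the x-axis.  The first [a = n/2] entities
   stand still at [0, 1, ..., a-1]; every other entity [i] trails, at distance
   [(i - a + 1) a], a point sweeping an interval [[0, L]] back and forth, one way
   per trajectory edge.  Entities of the same kind stay at least [1] apart, so a
   component has at most two members, and the moving [i] touches the fixed [p]
   exactly while the sweep is within [1/4] of [p + (i - a + 1) a].  These values
   are distinct integers, hence on every edge each of the [a (n - a) >= n^2/8]
   pairs meets once, at its own times: every meeting gives a merge or split vertex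
   and a two-element edge of the Reeb graph, and no two connectivity events
   coincide. *)

Lemma NoDup_list_prod {A B : Type} (l : list A) (l' : list B) :
  NoDup l -> NoDup l' -> NoDup (list_prod l l').
Proof.
  induction 1 as [|x l Hx Hl IH]; intros Hl'; cbn; [constructor|].
  apply NoDup_app; auto.
  - apply NoDup_map_NoDup_ForallPairs; auto.
    intros u v _ _ E. now injection E.
  - intros [y z] Hmap Hprod. apply in_map_iff in Hmap as [w [E _]].
    injection E as <- _. apply in_prod_iff in Hprod. tauto.
Qed.

Lemma nth_map_pairwise {A B : Type} (R : B -> B -> Prop) (f : A -> B) (l : list A) (d : B) :
  NoDup l -> (forall x y, In x l -> In y l -> x <> y -> ~ R (f x) (f y)) ->
  forall p q, (p < q)%nat -> (q < length (map f l))%nat ->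
    ~ R (nth p (map f l) d) (nth q (map f l) d).
Proof.
  intros Hl Hf p q Hpq Hq. rewrite length_map in Hq.
  destruct l as [|x0 l0]; [cbn in Hq; lia|].
  rewrite !(nth_indep _ d (f x0)) by (rewrite length_map; lia).
  rewrite !map_nth. apply Hf; try (apply nth_In; lia).
  intro E. apply (proj1 (NoDup_nth _ x0) Hl p q) in E; lia.
Qed.

Lemma INR_S_le j j' : (j < j')%nat -> INR j + 1 <= INR j'.
Proof. intro H. rewrite <- S_INR. apply le_INR. lia. Qed.

Lemma INR_neq_dist m m' : m <> m' -> 1 <= Rabs (INR m - INR m').
Proof.
  intro H. destruct (Nat.lt_gt_cases m m') as [[Hlt|Hlt] _]; auto.
  - pose proof (INR_S_le _ _ Hlt). split_Rabs; lra.
  - pose proof (INR_S_le _ _ Hlt). split_Rabs; lra.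
Qed.

Lemma mixed_radix_inj p p' x x' a :
  (p < a -> p' < a -> p + x * a = p' + x' * a -> p = p' /\ x = x')%nat.
Proof.
  intros Hp Hp' E. destruct (Nat.lt_trichotomy x x') as [Hx|[Hx|Hx]].
  - assert (S x * a <= x' * a)%nat by (apply Nat.mul_le_mono_r; lia). cbn in *; lia.
  - subst; lia.
  - assert (S x' * a <= x * a)%nat by (apply Nat.mul_le_mono_r; lia). cbn in *; lia.
Qed.

Lemma leaving_value w c m r e0 : (c = 1 \/ c = -1) -> 0 < m -> 0 < e0 -> Rabs w <= r ->
  (forall e, 0 < e < e0 -> r < Rabs (w + c * m * e)) -> w = c * r.
Proof.
  intros Hc Hm He0 Hw Hleave.
  assert (Hcw : c * w <= r) by (destruct Hc; subst c; split_Rabs; lra).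
  destruct (Rle_lt_dec r (c * w)) as [Hge|Hlt].
  { destruct Hc; subst c; lra. }
  set (e := Rmin e0 ((r - c * w) / m) / 2).
  assert (Hpos : 0 < (r - c * w) / m) by (apply Rdiv_lt_0_compat; lra).
  pose proof (Rmin_l e0 ((r - c * w) / m)). pose proof (Rmin_r e0 ((r - c * w) / m)).
  assert (He : 0 < e < e0) by (unfold e; pose proof (Rmin_glb_lt e0 _ _ He0 Hpos); lra).
  assert (Hme : m * e < r - c * w).
  { apply (Rmult_lt_reg_l (/ m)); [apply Rinv_0_lt_compat; lra|].
    replace (/ m * (m * e)) with e by (field; lra).
    replace (/ m * (r - c * w)) with ((r - c * w) / m) by (unfold Rdiv; ring).
    unfold e; lra. }
  assert (0 < m * e) by (apply Rmult_lt_0_compat; lra).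
  specialize (Hleave e He). exfalso.
  destruct Hc; subst c; split_Rabs; lra.
Qed.

Lemma shift_within lo hi s d c e : lo < s < hi -> (c = 1 \/ c = -1) ->
  0 < e < Rmin d (Rmin (s - lo) (hi - s)) -> e < d /\ lo < s + c * e < hi.
Proof.
  intros Hs Hc He.
  pose proof (Rmin_l d (Rmin (s - lo) (hi - s))). pose proof (Rmin_r d (Rmin (s - lo) (hi - s))).
  pose proof (Rmin_l (s - lo) (hi - s)). pose proof (Rmin_r (s - lo) (hi - s)).
  destruct Hc as [-> | ->]; lra.
Qed.

Lemma node_between j j' t t' : j <> j' -> INR j < t < INR j + 1 -> INR j' < t' < INR j' + 1 ->
  exists m, (m = j \/ m = j') /\ Rmin t t' <= INR m + 1 <= Rmax t t'.
Proof.
  intros Hne Ht Ht'.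
  pose proof (Rmin_l t t'). pose proof (Rmin_r t t').
  pose proof (Rmax_l t t'). pose proof (Rmax_r t t').
  destruct (Nat.lt_gt_cases j j') as [[Hlt|Hlt] _]; auto.
  - exists j. pose proof (INR_S_le _ _ Hlt). split; [auto|].
    split; [apply Rle_trans with t|apply Rle_trans with t']; lra.
  - exists j'. pose proof (INR_S_le _ _ Hlt). split; [auto|].
    split; [apply Rle_trans with t'|apply Rle_trans with t]; lra.
Qed.

Lemma edge_index_unique j j' t : INR j < t < INR j + 1 -> INR j' < t < INR j' + 1 -> j = j'.
Proof.
  intros Ht Ht'. destruct (Nat.eq_dec j j') as [|Hne]; [auto|exfalso].
  destruct (node_between j j' t t Hne Ht Ht') as [m [Hm Hb]].
  rewrite Rmin_left, Rmax_left in Hb by lra. destruct Hm as [-> | ->]; lra.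
Qed.

Section Trajectory.

Variable Q : nat -> R * R.

Lemma traj_node k : traj INR Q k (INR k) = Q k.
Proof.
  destruct k as [|k]; [reflexivity|].
  cbn [traj]. rewrite S_INR.
  destruct (Rle_dec (INR k + 1) (INR k)); [lra|].
  unfold lerp. destruct (Q (S k)) as [x y]. cbn.
  replace ((INR k + 1 - INR k) / (INR k + 1 - INR k)) with 1 by (field; lra).
  f_equal; ring.
Qed.

Lemma traj_on_edge k j t : (j < k)%nat -> INR j <= t <= INR j + 1 ->
  traj INR Q k t = lerp (INR j) (INR j + 1) (Q j) (Q (S j)) t.
Proof.
  induction k as [|k IH]; intros Hj Ht; [lia|].
  cbn [traj]. destruct (Rle_dec t (INR k)).
  - destruct (Nat.eq_dec j k) as [->|Hne].
    + replace t with (INR k) by lra. rewrite traj_node.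
      unfold lerp. destruct (Q k) as [x y]. cbn.
      replace (INR k - INR k) with 0 by ring. unfold Rdiv. f_equal; ring.
    + apply IH; auto; lia.
  - destruct (Nat.eq_dec j k) as [->|Hne]; [now rewrite S_INR|].
    pose proof (INR_S_le j k ltac:(lia)). lra.
Qed.

End Trajectory.

Lemma edge_of_time tau t : (1 <= tau)%nat -> 0 <= t <= INR tau ->
  exists j, (j < tau)%nat /\ INR j <= t <= INR j + 1.
Proof.
  intros Htau. destruct tau as [|tau]; [lia|]. clear Htau. revert t.
  induction tau as [|tau IH]; intros t Ht.
  - exists O. cbn in *. split; [lia|lra].
  - rewrite S_INR in Ht. destruct (Rle_dec t (INR (S tau))).
    + destruct (IH t) as [j [Hj Hjt]]; [lra|]. exists j. split; [lia|auto].
    + exists (S tau). split; [lia|lra].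
Qed.

Definition parity (k : nat) : R := if Nat.even k then 0 else 1.

Definition heading (k : nat) : R := 1 - 2 * parity k.

Lemma parity_cases k : parity k = 0 /\ heading k = 1 \/ parity k = 1 /\ heading k = -1.
Proof. unfold heading, parity. destruct (Nat.even k); [left|right]; lra. Qed.

Lemma parity_S k : parity (S k) = parity k + heading k.
Proof.
  unfold heading, parity. rewrite Nat.even_succ, <- Nat.negb_even.
  destruct (Nat.even k); cbn; ring.
Qed.

Definition sweep (L : R) (j : nat) (t : R) : R := L * (parity j + (t - INR j) * heading j).

Definition sweep_time (j : nat) (u : R) : R := INR j + parity j + heading j * u.

Lemma sweep_shift L j s h : sweep L j (s + h) = sweep L j s + heading j * L * h.
Proof. unfold sweep. ring. Qed.

Lemma sweep_at_nodes L j t : t = INR j \/ t = INR j + 1 -> sweep L j t = 0 \/ sweep L j t = L.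
Proof.
  unfold sweep. intros [-> | ->]; destruct (parity_cases j) as [[-> ->]|[-> ->]];
    [left|right|right|left]; ring.
Qed.

Lemma sweep_sweep_time L j u : sweep L j (sweep_time j u) = L * u.
Proof. unfold sweep, sweep_time. destruct (parity_cases j) as [[-> ->]|[-> ->]]; ring. Qed.

Lemma sweep_time_in_open j u : 0 < u < 1 -> INR j < sweep_time j u < INR j + 1.
Proof. unfold sweep_time. destruct (parity_cases j) as [[-> ->]|[-> ->]]; lra. Qed.

Definition sweep_hit (L : R) (j : nat) (v : R) : R := sweep_time j (v / L).

Lemma sweep_hit_spec L j v : 0 < v < L ->
  INR j < sweep_hit L j v < INR j + 1 /\ sweep L j (sweep_hit L j v) = v.
Proof.
  intros Hv. unfold sweep_hit. split.
  - apply sweep_time_in_open. split.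
    + apply Rdiv_lt_0_compat; lra.
    + apply (Rmult_lt_reg_l L); [lra|]. field_simplify; lra.
  - rewrite sweep_sweep_time. field. lra.
Qed.

Definition nfix (n : nat) : nat := n / 2.

Definition lag (n i : nat) : R := INR ((i - nfix n + 1) * nfix n).

Definition span (n : nat) : R := INR ((n - nfix n + 2) * nfix n).

Definition meet (n p i : nat) : R := INR (p + (i - nfix n + 1) * nfix n).

Definition sample (n i k : nat) : R * R :=
  if (i <? nfix n)%nat then (INR i, 0) else (span n * parity k - lag n i, 0).

Definition xpos (n j : nat) (t : R) (i : nat) : R :=
  if (i <? nfix n)%nat then INR i else sweep (span n) j t - lag n i.

Section Construction.

Variables n tau : nat.
Hypothesis n_ge2 : (2 <= n)%nat.

Local Notation close t i k := (dconn tau INR (sample n) (1/8) t i k).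
Local Notation conn t i k := (econn n tau INR (sample n) (1/8) t i k).

Lemma nfix_bounds : (1 <= nfix n < n)%nat.
Proof.
  unfold nfix. pose proof (Nat.div_mod_eq n 2).
  pose proof (Nat.mod_upper_bound n 2 ltac:(lia)). lia.
Qed.

Lemma meet_bounds p i : (p < nfix n)%nat -> (nfix n <= i < n)%nat ->
  1 <= meet n p i /\ meet n p i + 2 <= span n.
Proof.
  intros Hp Hi. pose proof nfix_bounds. unfold meet, span. split.
  - apply (le_INR 1). nia.
  - rewrite <- (plus_INR _ 2). apply le_INR.
    assert ((i - nfix n + 1) * nfix n <= (n - nfix n) * nfix n)%nat
      by (apply Nat.mul_le_mono_r; lia).
    nia.
Qed.

Lemma meet_dist p i p' i' : (p < nfix n)%nat -> (p' < nfix n)%nat ->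
  (nfix n <= i)%nat -> (nfix n <= i')%nat -> (p, i) <> (p', i') ->
  1 <= Rabs (meet n p i - meet n p' i').
Proof.
  intros Hp Hp' Hi Hi' Hne. apply INR_neq_dist. intro E.
  destruct (mixed_radix_inj _ _ _ _ _ Hp Hp' E) as [-> Hq].
  apply Hne. f_equal. lia.
Qed.

Lemma pos_on_edge j t i : (j < tau)%nat -> INR j <= t <= INR j + 1 ->
  Defs.pos tau INR (sample n) i t = (xpos n j t i, 0).
Proof.
  intros Hj Ht. unfold Defs.pos. rewrite (traj_on_edge _ _ j) by auto.
  unfold lerp, sample, xpos, sweep. rewrite parity_S.
  destruct (i <? nfix n)%nat; cbn; f_equal; field; lra.
Qed.

Lemma close_on_edge j t i k : (j < tau)%nat -> INR j <= t <= INR j + 1 ->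
  close t i k <-> Rabs (xpos n j t i - xpos n j t k) <= 1/4.
Proof.
  intros Hj Ht. unfold dconn, dist2. rewrite !(pos_on_edge j) by auto. cbn [fst snd].
  replace ((xpos n j t i - xpos n j t k) ^ 2 + (0 - 0) ^ 2)
    with (Rsqr (xpos n j t i - xpos n j t k)) by (unfold Rsqr; ring).
  rewrite sqrt_Rsqr_abs. lra.
Qed.

Lemma xpos_mover_fixed j t p i : (p < nfix n)%nat -> (nfix n <= i)%nat ->
  xpos n j t i - xpos n j t p = sweep (span n) j t - meet n p i.
Proof.
  intros Hp Hi. unfold xpos, meet, lag.
  rewrite (proj2 (Nat.ltb_lt _ _) Hp), (proj2 (Nat.ltb_ge _ _) Hi), plus_INR. ring.
Qed.

(* Fixed entities are spaced [1] apart and moving ones [nfix n >= 1] apart. *)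
Lemma xpos_same_kind_far j t i k : i <> k -> (i <? nfix n)%nat = (k <? nfix n)%nat ->
  1 <= Rabs (xpos n j t i - xpos n j t k).
Proof.
  intros Hik E. pose proof nfix_bounds. unfold xpos, lag. rewrite E.
  destruct (k <? nfix n)%nat eqn:Ek; [now apply INR_neq_dist|].
  apply Nat.ltb_ge in Ek, E.
  replace (_ - _ - _) with (INR ((k - nfix n + 1) * nfix n) - INR ((i - nfix n + 1) * nfix n))
    by ring.
  apply INR_neq_dist. intro Hlag. apply Nat.mul_cancel_r in Hlag; lia.
Qed.

Lemma close_fixed_mover j t i k : (j < tau)%nat -> INR j <= t <= INR j + 1 ->
  (i < k)%nat -> close t i k -> (i < nfix n <= k)%nat.
Proof.
  intros Hj Ht Hik Hc. rewrite (close_on_edge j) in Hc by auto.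
  destruct (i <? nfix n)%nat eqn:Ei, (k <? nfix n)%nat eqn:Ek;
    try (pose proof (xpos_same_kind_far j t i k ltac:(lia) ltac:(congruence)); lra).
  - apply Nat.ltb_lt in Ei. apply Nat.ltb_ge in Ek. lia.
  - apply Nat.ltb_ge in Ei. apply Nat.ltb_lt in Ek. lia.
Qed.

Lemma close_chain j t x y z : (j < tau)%nat -> INR j <= t <= INR j + 1 ->
  x <> y -> y <> z -> close t x y -> close t y z -> x = z.
Proof.
  intros Hj Ht Hxy Hyz Cxy Cyz. rewrite (close_on_edge j) in Cxy, Cyz by auto.
  destruct (Nat.eq_dec x z) as [|Hxz]; [auto|exfalso].
  assert (Rabs (xpos n j t x - xpos n j t z) <= 1/2) by (split_Rabs; lra).
  destruct (x <? nfix n)%nat eqn:Ex, (y <? nfix n)%nat eqn:Ey, (z <? nfix n)%nat eqn:Ez;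
    first [ pose proof (xpos_same_kind_far j t x y Hxy ltac:(congruence)); lra
          | pose proof (xpos_same_kind_far j t y z Hyz ltac:(congruence)); lra
          | pose proof (xpos_same_kind_far j t x z Hxz ltac:(congruence)); lra ].
Qed.

Lemma conn_close j t x y : (j < tau)%nat -> INR j <= t <= INR j + 1 ->
  conn t x y -> x = y \/ close t x y.
Proof.
  intros Hj Hjt Hc.
  induction Hc as [x y Hs | x | x y z _ IH1 _ IH2]; [right; apply Hs|left; auto|].
  destruct IH1 as [<-|C1]; [auto|]. destruct IH2 as [<-|C2]; [auto|].
  destruct (Nat.eq_dec x y) as [<-|Hxy]; [auto|].
  destruct (Nat.eq_dec y z) as [<-|Hyz]; [auto|].
  left. exact (close_chain j t x y z Hj Hjt Hxy Hyz C1 C2).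
Qed.

Lemma close_mover_fixed j t p i : (j < tau)%nat -> INR j <= t <= INR j + 1 ->
  (p < nfix n)%nat -> (nfix n <= i)%nat ->
  (close t i p <-> Rabs (sweep (span n) j t - meet n p i) <= 1/4) /\
  (close t p i <-> Rabs (sweep (span n) j t - meet n p i) <= 1/4).
Proof.
  intros Hj Ht Hp Hi. rewrite !(close_on_edge j) by auto.
  rewrite (Rabs_minus_sym (xpos n j t p)), xpos_mover_fixed by auto. tauto.
Qed.

Lemma far_at_nodes j t p i : (p < nfix n)%nat -> (nfix n <= i < n)%nat ->
  t = INR j \/ t = INR j + 1 -> 1 <= Rabs (sweep (span n) j t - meet n p i).
Proof.
  intros Hp Hi Ht. destruct (meet_bounds p i Hp Hi).
  destruct (sweep_at_nodes (span n) j t Ht) as [-> | ->]; split_Rabs; lra.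
Qed.

Definition event_sign (b : bool) : R := if b then -1 else 1.

(* A connection event is detected looking backwards in time, a disconnection
   event looking forwards. *)
Lemma event_escape b i k s : pair_event tau INR (sample n) (1/8) b i k s ->
  exists d, d > 0 /\ forall e, 0 < e < d -> ~ close (s + event_sign b * e) i k.
Proof.
  destruct b; intros [_ [_ [d [Hd Hfar]]]]; exists d; split; auto;
    intros e He; apply Hfar; cbn; lra.
Qed.

Lemma event_offset b p i j s : (p < nfix n)%nat -> (nfix n <= i < n)%nat ->
  (j < tau)%nat -> INR j <= s <= INR j + 1 -> pair_event tau INR (sample n) (1/8) b p i s ->
  sweep (span n) j s - meet n p i = event_sign b * heading j / 4.
Proof.
  intros Hp Hi Hj Hs Hev.
  pose proof (meet_bounds p i Hp Hi) as [Hmeet Hspan].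
  assert (Hnear : Rabs (sweep (span n) j s - meet n p i) <= 1/4).
  { apply (close_mover_fixed j s p i); auto; try lia. destruct b; apply Hev. }
  assert (Hint : INR j < s < INR j + 1).
  { split; apply Rnot_le_lt; intro C;
      pose proof (far_at_nodes j s p i Hp Hi ltac:(lra)); lra. }
  destruct (event_escape b p i s Hev) as [d [Hd Hfar]].
  assert (Hsign : event_sign b = 1 \/ event_sign b = -1) by (destruct b; cbn; auto).
  enough (sweep (span n) j s - meet n p i = event_sign b * heading j * (1/4)) by lra.
  apply (leaving_value _ _ (span n) _ (Rmin d (Rmin (s - INR j) (INR j + 1 - s))));
    auto; try lra.
  - destruct Hsign as [-> | ->]; destruct (parity_cases j) as [[_ ->]|[_ ->]]; lra.
  - repeat apply Rmin_glb_lt; lra.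
  - intros e He. apply Rnot_le_lt. intro Hclose.
    destruct (shift_within _ _ s d _ e Hint Hsign He) as [Hed Hin].
    apply (Hfar e); [lra|].
    apply (close_mover_fixed j _ p i); auto; try lra; try lia.
    rewrite sweep_shift.
    replace (_ + _ - _)
      with (sweep (span n) j s - meet n p i + event_sign b * heading j * span n * e) by ring.
    exact Hclose.
Qed.

Lemma sample_general_position : (1 <= tau)%nat -> general_position n tau INR (sample n) (1/8).
Proof.
  intros Htau s i k i' k' b b' Hik Hk Hik' Hk' E E'.
  assert (Hs : 0 <= s <= INR tau)
    by (destruct b; cbn in E; destruct E as [Hs _]; cbn in Hs; lra).
  destruct (edge_of_time tau s Htau Hs) as [j [Hj Hjs]].
  assert (C : close s i k) by (destruct b; apply E).
  assert (C' : close s i' k') by (destruct b'; apply E').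
  pose proof (close_fixed_mover j s i k Hj Hjs Hik C) as [Hi Hk0].
  pose proof (close_fixed_mover j s i' k' Hj Hjs Hik' C') as [Hi' Hk0'].
  pose proof (event_offset b i k j s Hi ltac:(lia) Hj Hjs E) as O.
  pose proof (event_offset b' i' k' j s Hi' ltac:(lia) Hj Hjs E') as O'.
  assert (Hdiff : (i, k) <> (i', k') -> False).
  { intro Hne. pose proof (meet_dist i k i' k' Hi Hi' Hk0 Hk0' Hne).
    destruct b, b'; cbn in O, O';
      destruct (parity_cases j) as [[_ Hh]|[_ Hh]]; rewrite Hh in *; split_Rabs; lra. }
  destruct (Nat.eq_dec i i') as [<-|Hne]; [destruct (Nat.eq_dec k k') as [<-|Hne]|];
    try (exfalso; apply Hdiff; congruence).
  repeat split; auto.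
  destruct b, b'; auto; cbn in O, O';
    destruct (parity_cases j) as [[_ Hh]|[_ Hh]]; rewrite Hh in *; lra.
Qed.

Lemma conn_movers j t i i' : (j < tau)%nat -> INR j <= t <= INR j + 1 ->
  (nfix n <= i)%nat -> (nfix n <= i')%nat -> conn t i i' -> i = i'.
Proof.
  intros Hj Hjt Hi Hi' Hc. destruct (conn_close j t i i' Hj Hjt Hc) as [|C]; [auto|].
  rewrite (close_on_edge j) in C by auto.
  destruct (Nat.eq_dec i i') as [|Hne]; [auto|exfalso].
  pose proof (xpos_same_kind_far j t i i' Hne).
  rewrite (proj2 (Nat.ltb_ge _ _) Hi), (proj2 (Nat.ltb_ge _ _) Hi') in *. lra.
Qed.

Lemma touch_time_critical j p i : (j < tau)%nat -> (p < nfix n)%nat -> (nfix n <= i < n)%nat ->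
  critical_time n tau INR (sample n) (1/8) (sweep_hit (span n) j (meet n p i - 1/4)).
Proof.
  intros Hj Hp Hi. pose proof nfix_bounds. pose proof (INR_S_le j tau Hj). pose proof (pos_INR j).
  destruct (sweep_hit_spec (span n) j (meet n p i - 1/4)) as [Hint Hsw];
    [pose proof (meet_bounds p i Hp Hi); lra|].
  set (s := sweep_hit (span n) j (meet n p i - 1/4)) in *.
  split; [cbn; lra|]. intros d Hd.
  set (e := Rmin d (Rmin (s - INR j) (INR j + 1 - s)) / 2).
  assert (He : 0 < e < Rmin d (Rmin (s - INR j) (INR j + 1 - s))).
  { assert (0 < Rmin d (Rmin (s - INR j) (INR j + 1 - s))) by (repeat apply Rmin_glb_lt; lra).
    unfold e; lra. }
  assert (Hdir : - heading j = 1 \/ - heading j = -1)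
    by (destruct (parity_cases j) as [[_ ->]|[_ ->]]; lra).
  destruct (shift_within _ _ s d _ e Hint Hdir He) as [Hed Hin].
  exists (s + - heading j * e). split; [cbn; lra|]. split.
  { destruct Hdir as [Hh|Hh]; rewrite Hh; split_Rabs; lra. }
  exists i, p. split; [lia|]. split; [lia|]. intros Hiff.
  assert (Hspan : 0 < span n) by (pose proof (meet_bounds p i Hp Hi); lra).
  assert (Hnow : conn s i p).
  { apply rt_step. split; [lia|]. split; [lia|].
    apply (close_mover_fixed j s p i); auto; try lra; try lia.
    rewrite Hsw. split_Rabs; lra. }
  apply Hiff in Hnow.
  destruct (conn_close j (s + - heading j * e) i p Hj ltac:(lra) Hnow) as [|C]; [lia|].
  apply (close_mover_fixed j _ p i) in C; auto; try lra; try lia.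
  rewrite sweep_shift, Hsw in C.
  replace (heading j * span n * (- heading j * e)) with (- (span n * e)) in C
    by (destruct (parity_cases j) as [[_ ->]|[_ ->]]; ring).
  assert (0 < span n * e) by (apply Rmult_lt_0_compat; lra).
  split_Rabs; lra.
Qed.

Lemma touch_time_inj j p i j' p' i' : (p < nfix n)%nat -> (nfix n <= i < n)%nat ->
  (p' < nfix n)%nat -> (nfix n <= i' < n)%nat ->
  sweep_hit (span n) j (meet n p i - 1/4) = sweep_hit (span n) j' (meet n p' i' - 1/4) ->
  (j, p, i) = (j', p', i').
Proof.
  intros Hp Hi Hp' Hi' E.
  destruct (sweep_hit_spec (span n) j (meet n p i - 1/4)) as [Hint Hsw];
    [pose proof (meet_bounds p i Hp Hi); lra|].
  destruct (sweep_hit_spec (span n) j' (meet n p' i' - 1/4)) as [Hint' Hsw'];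
    [pose proof (meet_bounds p' i' Hp' Hi'); lra|].
  rewrite E in Hint. pose proof (edge_index_unique _ _ _ Hint Hint') as <-.
  rewrite E, Hsw' in Hsw.
  destruct (Nat.eq_dec p p'), (Nat.eq_dec i i'); try congruence; exfalso.
  all: pose proof (meet_dist p i p' i' Hp Hp' ltac:(lia) ltac:(lia) ltac:(congruence));
    split_Rabs; lra.
Qed.

Lemma pass_witness_distinct j p i j' p' i' : (j < tau)%nat -> (j' < tau)%nat ->
  (p < nfix n)%nat -> (nfix n <= i < n)%nat -> (p' < nfix n)%nat -> (nfix n <= i' < n)%nat ->
  (j, p, i) <> (j', p', i') ->
  ~ same_edge n tau INR (sample n) (1/8)
      (i, sweep_hit (span n) j (meet n p i)) (i', sweep_hit (span n) j' (meet n p' i')).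
Proof.
  intros Hj Hj' Hp Hi Hp' Hi' Hne [Hsame Hbetween]. pose proof nfix_bounds.
  pose proof (INR_S_le j tau Hj). pose proof (INR_S_le j' tau Hj').
  pose proof (pos_INR j). pose proof (pos_INR j').
  destruct (meet_bounds p i Hp Hi), (meet_bounds p' i' Hp' Hi').
  destruct (sweep_hit_spec (span n) j (meet n p i) ltac:(lra)) as [Hint Hsw].
  destruct (sweep_hit_spec (span n) j' (meet n p' i') ltac:(lra)) as [Hint' Hsw'].
  set (t := sweep_hit (span n) j (meet n p i)) in *.
  set (t' := sweep_hit (span n) j' (meet n p' i')) in *.
  assert (Hpass : conn t i p).
  { apply rt_step. split; [lia|]. split; [lia|].
    apply (close_mover_fixed j t p i); auto; try lra; try lia.
    rewrite Hsw, Rminus_diag, Rabs_R0. lra. }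
  assert (Ei : i' = i).
  { apply (conn_movers j' t' i' i); try lra; try lia.
    apply (Hsame i ltac:(lia)). apply rt_refl. }
  subst i'.
  assert (Ep : p' = p).
  { pose proof (proj1 (Hsame p ltac:(lia)) Hpass) as Hc.
    destruct (conn_close j' t' i p Hj' ltac:(lra) Hc) as [|C]; [lia|].
    apply (close_mover_fixed j' t' p i) in C; auto; try lra; try lia.
    rewrite Hsw' in C. destruct (Nat.eq_dec p' p) as [|Hpp]; [auto|exfalso].
    pose proof (meet_dist p i p' i Hp Hp' ltac:(lia) ltac:(lia) ltac:(congruence)).
    split_Rabs; lra. }
  subst p'.
  assert (Hjj : j <> j') by congruence.
  destruct (node_between j j' t t' Hjj Hint Hint') as [m [Hm Hnode]].
  assert (Hmt : (m < tau)%nat) by (destruct Hm as [-> | ->]; auto).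
  pose proof (INR_S_le m tau Hmt).
  pose proof (proj2 (Hbetween (INR m + 1) Hnode p ltac:(lia)) Hpass) as Hc.
  destruct (conn_close m (INR m + 1) i p Hmt ltac:(lra) Hc) as [|C]; [lia|].
  apply (close_mover_fixed m _ p i) in C; auto; try lra; try lia.
  pose proof (far_at_nodes m (INR m + 1) p i Hp Hi (or_intror eq_refl)). lra.
Qed.

Lemma pass_witness_in_range j p i : (j < tau)%nat -> (p < nfix n)%nat -> (nfix n <= i < n)%nat ->
  (i < n)%nat /\ 0 <= sweep_hit (span n) j (meet n p i) <= INR tau.
Proof.
  intros Hj Hp Hi. pose proof (INR_S_le j tau Hj). pose proof (pos_INR j).
  destruct (meet_bounds p i Hp Hi).
  destruct (sweep_hit_spec (span n) j (meet n p i) ltac:(lra)) as [Hint _].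
  split; [lia|lra].
Qed.

End Construction.

Definition meetings (n tau : nat) : list (nat * nat * nat) :=
  list_prod (list_prod (seq 0 tau) (seq 0 (nfix n))) (seq (nfix n) (n - nfix n)).

Definition touch_time (n : nat) (x : nat * nat * nat) : R :=
  let '(j, p, i) := x in sweep_hit (span n) j (meet n p i - 1/4).

Definition pass_witness (n : nat) (x : nat * nat * nat) : nat * R :=
  let '(j, p, i) := x in (i, sweep_hit (span n) j (meet n p i)).

Lemma in_meetings n tau j p i : In (j, p, i) (meetings n tau) <->
  (j < tau)%nat /\ (p < nfix n)%nat /\ (nfix n <= i < n)%nat.
Proof. unfold meetings. rewrite !in_prod_iff, !in_seq. lia. Qed.

Lemma meetings_NoDup n tau : NoDup (meetings n tau).
Proof. unfold meetings. repeat apply NoDup_list_prod; apply seq_NoDup. Qed.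

Lemma length_meetings n tau : length (meetings n tau) = (tau * nfix n * (n - nfix n))%nat.
Proof. unfold meetings. rewrite !length_prod, !length_seq. reflexivity. Qed.

Lemma length_meetings_ge n tau : (2 <= n)%nat ->
  INR (length (meetings n tau)) >= 1/8 * INR tau * INR n ^ 2.
Proof.
  intros Hn. rewrite length_meetings.
  assert (Hsq : (n * n <= 8 * (nfix n * (n - nfix n)))%nat).
  { unfold nfix. pose proof (Nat.div_mod_eq n 2).
    pose proof (Nat.mod_upper_bound n 2 ltac:(lia)). nia. }
  assert (H : (tau * (n * n) <= 8 * (tau * nfix n * (n - nfix n)))%nat) by nia.
  apply le_INR in H. rewrite !mult_INR in *. cbn in H |- *. nra.
Qed.

Lemma distinct_components_nil n tau T P eps t : distinct_components n tau T P eps t nil.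
Proof. split; [constructor|]. split; intros i; [|intros j]; cbn; tauto. Qed.

Theorem lemma1 :
  exists c : R, c > 0 /\
    forall n tau : nat, (2 <= n)%nat -> (1 <= tau)%nat ->
      exists (eps : R) (T : nat -> R) (P : nat -> nat -> R * R),
        valid_input tau T eps /\
        general_position n tau T P eps /\
        reeb_vertices_at_least n tau T P eps (c * INR tau * INR n ^ 2) /\
        reeb_edges_at_least n tau T P eps (c * INR tau * INR n ^ 2).
Proof.
  exists (1/8). split; [lra|]. intros n tau Hn Htau.
  exists (1/8), INR, (sample n).
  pose proof (length_meetings_ge n tau Hn) as Hcount.
  split; [|split; [|split]].
  - split; [intros k _; rewrite S_INR|]; lra.
  - exact (sample_general_position n tau Hn Htau).
  - exists nil, nil, (map (touch_time n) (meetings n tau)).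
    split; [apply distinct_components_nil|]. split; [apply distinct_components_nil|].
    split; [|split].
    + apply NoDup_map_NoDup_ForallPairs; [|apply meetings_NoDup].
      intros [[j p] i] [[j' p'] i'] Hx Hy. apply in_meetings in Hx, Hy.
      apply touch_time_inj; tauto.
    + intros s Hs. apply in_map_iff in Hs as [[[j p] i] [<- Hx]]. apply in_meetings in Hx.
      apply touch_time_critical; tauto.
    + cbn. now rewrite length_map.
  - exists (map (pass_witness n) (meetings n tau)). split; [|split].
    + intros w Hw. apply in_map_iff in Hw as [[[j p] i] [<- Hx]]. apply in_meetings in Hx.
      apply pass_witness_in_range; tauto.
    + apply nth_map_pairwise; [apply meetings_NoDup|].
      intros [[j p] i] [[j' p'] i'] Hx Hy. apply in_meetings in Hx, Hy.
      apply pass_witness_distinct; tauto.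
    + now rewrite length_map.
Qed.
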